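(* Let $q\in\,]0,1[$, $\omega\ge0$, let $I$ be an interval containing $\omega_0:=\omega/(1-q)$, $a,b\in I$ with $a<b$, $\alpha,\beta\in\mathbb{R}$, and let $L,\bar L:I\times\mathbb{R}\times\mathbb{R}\to\mathbb{R}$ both satisfy: for every $t$, $(u,v)\mapsto L(t,u,v)$ is $C^1$; $t\mapsto L(t,y(\sigma(t)),\tilde D_{q,\omega}[y](t))$ is continuous at $\omega_0$ for every admissible $y$; and $t\mapsto\partial_iL(t,y(\sigma(t)),\tilde D_{q,\omega}[y](t))$, $i=2,3$, belong to $\mathcal{Y}^1([a,b]_{q,\omega},\mathbb{R})$ for every admissible $y$ (and the same for $\bar L$ with its admissible functions). Let $\mathcal{L}(y):=\int_a^bL(t,y(\sigma(t)),\tilde D_{q,\omega}[y](t))\,\tilde d_{q,\omega}t$ and $\bar{\mathcal{L}}(\bar y):=\int_a^b\bar L(t,\bar y(\sigma(t)),\tilde D_{q,\omega}[\bar y](t))\,\tilde d_{q,\omega}t$. Let $y=z(t,\bar y)$ be a transformation with a unique inverse $\bar y=\bar z(t,y)$ for all $t\in[a,b]_{q,\omega}$, such that there is a one-to-one correspondence $y(t)\leftrightarrow\bar y(t)$ between all functions $y\in\mathcal{Y}^1([a,b]_{q,\omega},\mathbb{R})$ with $y(a)=\alpha$, $y(b)=\beta$ and all functions $\bar y\in\mathcal{Y}^1([a,b]_{q,\omega},\mathbb{R})$ with $$\bar y(a)=\bar z(a,\alpha),\qquad \bar y(b)=\bar z(b,\beta).\qquad( * )$$ Suppose there is a function $G:I\times\mathbb{R}\to\mathbb{R}$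 such that, for corresponding $y$ and $\bar y$, $$L\bigl(t,y(\sigma(t)),\tilde D_{q,\omega}[y](t)\bigr)-\bar L\bigl(t,\bar y(\sigma(t)),\tilde D_{q,\omega}[\bar y](t)\bigr)=\tilde D_{q,\omega}\bigl[\tau\mapsto G(\tau,\bar y(\tau))\bigr](t)\quad\forall t\in[a,b]_{q,\omega}.$$ Then, if $\bar y_*$ is a maximizer (resp. minimizer) of $\bar{\mathcal{L}}$ among functions satisfying $( * )$, the function $y_*=z(t,\bar y_* )$ is a maximizer (resp. minimizer) of $\mathcal{L}$ among functions satisfying $y(a)=\alpha$, $y(b)=\beta$.
   Context: $\sigma(t):=qt+\omega$, $\sigma^{-1}(t):=q^{-1}(t-\omega)$, $\sigma^k$ the $k$-fold composition. Hahn symmetric derivative: for $t\neq\omega_0$, $\tilde D_{q,\omega}[f](t):=\frac{f(\sigma(t))-f(\sigma^{-1}(t))}{\sigma(t)-\sigma^{-1}(t)}$; $\tilde D_{q,\omega}[f](\omega_0):=f'(\omega_0)$ (classical derivative). Hahn symmetric integral: $\int_{\omega_0}^xF\,\tilde d_{q,\omega}t:=(\sigma^{-1}(x)-\sigma(x))\sum_{n\ge0}q^{2n+1}F(\sigma^{2n+1}(x))$, $\int_a^bF\,\tilde d_{q,\omega}t:=\int_{\omega_0}^bF\,\tilde d_{q,\omega}t-\int_{\omega_0}^aF\,\tilde d_{q,\omega}t$. $[s]_{q,\omega}:=\{\sigma^{2n+1}(s):n\in\mathbb{N}_0\}\cup\{\omega_0\}$, $[a,b]_{q,\omega}:=[a]_{q,\omega}\cup[b]_{q,\omega}$.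 $\mathcal{Y}^1([a,b]_{q,\omega},\mathbb{R})$: functions $y:I\to\mathbb{R}$ with $y$ and $\tilde D_{q,\omega}[y]$ bounded on $[a,b]_{q,\omega}$ and continuous at $\omega_0$. Admissible functions for $\mathcal{L}$ are $y\in\mathcal{Y}^1$ with $y(a)=\alpha$, $y(b)=\beta$; for $\bar{\mathcal{L}}$ they are $\bar y\in\mathcal{Y}^1$ satisfying $( * )$. $\partial_jL$ denotes the partial derivative in the $j$-th argument. *)

From Stdlib Require Import Reals ClassicalEpsilon.
From Coquelicot Require Import Coquelicot.
Open Scope R_scope.

Section Hahn.
Variables (q w : R).

Definition sigma (t : R) : R := q * t + w.
Definition sigma_inv (t : R) : R := (t - w) / q.
Definition sigma_iter (k : nat) (t : R) : R := Nat.iter k sigma t.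
Definition omega0 : R := w / (1 - q).

Definition qw_point_set (s t : R) : Prop :=
  (exists n : nat, t = sigma_iter (2 * n + 1) s) \/ t = omega0.
Definition qw_set (a b t : R) : Prop := qw_point_set a t \/ qw_point_set b t.

(* classical derivative of f : I -> R at x (one-sided if x is an endpoint of I) *)
Definition is_derive_within (I : R -> Prop) (f : R -> R) (x d : R) : Prop :=
  filterlim (fun t => (f t - f x) / (t - x))
    (within (fun t => I t /\ t <> x) (locally x)) (locally d).

Definition derive_within (I : R -> Prop) (f : R -> R) (x : R) : R :=
  epsilon (inhabits 0) (fun d => is_derive_within I f x d).

Definition hahn_quot (f : R -> R) (t : R) : R :=
  (f (sigma t) - f (sigma_inv t)) / (sigma t - sigma_inv t).

Definition hahn_D (I : R -> Prop) (f : R -> R) (t : R) : R :=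
  if Req_EM_T t omega0 then derive_within I f t else hahn_quot f t.

Definition hahn_D_is (I : R -> Prop) (f : R -> R) (t d : R) : Prop :=
  (t <> omega0 -> hahn_quot f t = d) /\
  (t = omega0 -> is_derive_within I f omega0 d).

Definition hahn_int0 (F : R -> R) (x : R) : R :=
  (sigma_inv x - sigma x) *
  Series (fun n : nat => q ^ (2 * n + 1) * F (sigma_iter (2 * n + 1) x)).
Definition hahn_int (F : R -> R) (a b : R) : R := hahn_int0 F b - hahn_int0 F a.

Definition cont_within (I : R -> Prop) (f : R -> R) (x : R) : Prop :=
  filterlim f (within I (locally x)) (locally (f x)).

Definition bounded_on (S : R -> Prop) (f : R -> R) : Prop :=
  exists M : R, forall t, S t -> Rabs (f t) <= M.

Definition Y1 (I : R -> Prop) (a b : R) (y : R -> R) : Prop :=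
  (exists d, is_derive_within I y omega0 d) /\
  bounded_on (qw_set a b) y /\ bounded_on (qw_set a b) (hahn_D I y) /\
  cont_within I y omega0 /\ cont_within I (hahn_D I y) omega0.

Definition lag_comp (I : R -> Prop) (L : R -> R -> R -> R) (y : R -> R) (t : R) : R :=
  L t (y (sigma t)) (hahn_D I y t).

Definition functional (I : R -> Prop) (L : R -> R -> R -> R) (a b : R) (y : R -> R) : R :=
  hahn_int (lag_comp I L y) a b.

End Hahn.

Definition d2 (L : R -> R -> R -> R) (t u v : R) : R := Derive (fun u' => L t u' v) u.
Definition d3 (L : R -> R -> R -> R) (t u v : R) : R := Derive (fun v' => L t u v') v.

Definition C1_uv (f : R -> R -> R) : Prop :=
  forall u v : R,
    ex_derive (fun u' => f u' v) u /\ ex_derive (fun v' => f u v') v /\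
    continuous (fun p : R * R => Derive (fun u' => f u' (snd p)) (fst p)) (u, v) /\
    continuous (fun p : R * R => Derive (fun v' => f (fst p) v') (snd p)) (u, v).

Definition lagrangian_hyp (q w : R) (I : R -> Prop) (a b : R)
    (L : R -> R -> R -> R) (adm : (R -> R) -> Prop) : Prop :=
  (forall t, I t -> C1_uv (L t)) /\
  forall y, adm y ->
    cont_within I (lag_comp q w I L y) (omega0 q w) /\
    Y1 q w I a b (fun t => d2 L t (y (sigma q w t)) (hahn_D q w I y t)) /\
    Y1 q w I a b (fun t => d3 L t (y (sigma q w t)) (hahn_D q w I y t)).

Definition is_interval (I : R -> Prop) : Prop :=
  forall x y z, I x -> I z -> x <= y <= z -> I y.

(* The Hahn integral over [s]_{q,w} is the sum of the Hahn difference quotients at the odd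
   iterates sigma^(2n+1)(s), weighted by the spacing of the neighbouring even iterates, so it
   telescopes: if G is a Hahn antiderivative of F, continuous at omega0 (the common limit of
   all iterates), then int_omega0^s F = G(s) - G(omega0). Applied to the difference of the two
   integrands, L(y) - Lbar(ybar) = G(b, ybar(b)) - G(a, ybar(a)), and the boundary conditions
   on ybar make the right-hand side a constant independent of the pair (y, ybar). The one-to-one
   correspondence then carries optimality from Lbar to L. *)
From Pilot Require Import Defs.
From Stdlib Require Import Reals Lra Lia Classical FunctionalExtensionality PropExtensionality.
From Coquelicot Require Import Coquelicot.
(* Re-imported so that [sigma] is the Hahn map rather than the finite sum of Stdlib Reals. *)
Import Defs.
Open Scope R_scope.

Lemma is_interval_between (I : R -> Prop) u v s : is_interval I -> I u -> I v ->
  (u <= s <= v \/ v <= s <= u) -> I s.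
Proof. intros HI Hu Hv [H|H]; [exact (HI u s v Hu Hv H) | exact (HI v s u Hv Hu H)]. Qed.

Lemma is_series_telescope (u : nat -> R) (l : R) : is_lim_seq u l ->
  is_series (fun n => u n - u (S n)) (u O - l).
Proof.
  intros Hu.
  assert (Hsum : forall N, sum_n (fun n => u n - u (S n)) N = u O - u (S N)).
  { induction N as [|N IH]; [now rewrite sum_O|].
    rewrite sum_Sn, IH. unfold plus; simpl. ring. }
  unfold is_series.
  apply (filterlim_ext (fun N => u O - u (S N))); [intros; now rewrite Hsum|].
  apply is_lim_seq_incr_1 in Hu.
  exact (is_lim_seq_minus' _ _ _ _ (is_lim_seq_const (u O)) Hu).
Qed.

Lemma is_derive_within_cont (I : R -> Prop) g x d :
  is_derive_within I g x d -> cont_within I g x.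
Proof.
  intros H. apply (filterlim_locally (F := within I (locally x))). intros eps.
  destruct (proj1 (filterlim_locally (F := within (fun t => I t /\ t <> x) (locally x)) _ _)
              H (mkposreal 1 Rlt_0_1)) as [d1 Hd1].
  assert (Hd : 0 < Rabs d + 1) by (pose proof (Rabs_pos d); lra).
  assert (He : 0 < eps / (Rabs d + 1)) by (apply Rdiv_lt_0_compat; [apply cond_pos | lra]).
  exists (mkposreal _ (Rmin_pos _ _ (cond_pos d1) He)).
  intros t Ht HIt. change (Rabs (t - x) < Rmin d1 (eps / (Rabs d + 1))) in Ht.
  change (Rabs (g t - g x) < eps).
  pose proof (Rmin_l d1 (eps / (Rabs d + 1))). pose proof (Rmin_r d1 (eps / (Rabs d + 1))).
  destruct (Req_dec t x) as [->|Hne]; [rewrite Rminus_diag, Rabs_R0; apply cond_pos|].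
  assert (Hquot : Rabs ((g t - g x) / (t - x)) <= Rabs d + 1).
  { assert (Hb : ball x d1 t) by (change (Rabs (t - x) < d1); lra).
    specialize (Hd1 t Hb (conj HIt Hne)). change (Rabs ((g t - g x) / (t - x) - d) < 1) in Hd1.
    pose proof (Rabs_triang_inv ((g t - g x) / (t - x)) d). lra. }
  replace (g t - g x) with ((g t - g x) / (t - x) * (t - x)) by (field; lra).
  rewrite Rabs_mult.
  apply (Rle_lt_trans _ ((Rabs d + 1) * Rabs (t - x))).
  - apply Rmult_le_compat_r; [apply Rabs_pos | exact Hquot].
  - replace (pos eps) with ((Rabs d + 1) * (eps / (Rabs d + 1))) by (field; lra).
    apply Rmult_lt_compat_l; lra.
Qed.

Lemma is_derive_within_ext (I : R -> Prop) f g x d : (forall t, I t -> f t = g t) -> I x ->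
  is_derive_within I f x d -> is_derive_within I g x d.
Proof.
  intros E Hx H.
  apply (filterlim_within_ext (fun t => I t /\ t <> x) (fun t => (f t - f x) / (t - x))); auto.
  intros t [Ht _]. now rewrite (E t Ht), (E x Hx).
Qed.

Lemma derive_within_ext (I : R -> Prop) f g x : (forall t, I t -> f t = g t) -> I x ->
  derive_within I f x = derive_within I g x.
Proof.
  intros E Hx. unfold derive_within. f_equal.
  apply functional_extensionality. intros d. apply propositional_extensionality.
  split; apply is_derive_within_ext; auto. intros t Ht; symmetry; auto.
Qed.

Section HahnOperators.

Variables q w : R.
Hypothesis Hq : 0 < q < 1.

Lemma sigma_minus_omega0 t : sigma q w t - omega0 q w = q * (t - omega0 q w).
Proof. unfold sigma, omega0. field. lra. Qed.

Lemma sigma_inv_minus_omega0 t : sigma_inv q w t - omega0 q w = (t - omega0 q w) / q.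
Proof. unfold sigma_inv, omega0. field. lra. Qed.

Lemma sigma_iter_minus_omega0 k x :
  sigma_iter q w k x - omega0 q w = q ^ k * (x - omega0 q w).
Proof.
  induction k as [|k IH]; [simpl; ring|].
  change (sigma_iter q w (S k) x) with (sigma q w (sigma_iter q w k x)).
  rewrite sigma_minus_omega0, IH. simpl. ring.
Qed.

Lemma sigma_inv_sigma t : sigma_inv q w (sigma q w t) = t.
Proof. unfold sigma_inv, sigma. field. lra. Qed.

Lemma sigma_omega0 : sigma q w (omega0 q w) = omega0 q w.
Proof. unfold sigma, omega0. field. lra. Qed.

Lemma sigma_inv_omega0 : sigma_inv q w (omega0 q w) = omega0 q w.
Proof. unfold sigma_inv, omega0. field. lra. Qed.

Lemma sigma_iter_neq_omega0 k x : x <> omega0 q w -> sigma_iter q w k x <> omega0 q w.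
Proof.
  intros Hx E. pose proof (sigma_iter_minus_omega0 k x) as Ek.
  rewrite E, Rminus_diag in Ek. symmetry in Ek.
  apply Rmult_integral in Ek as [Hk|Hk]; [|lra].
  exact (pow_nonzero q k ltac:(lra) Hk).
Qed.

(* The weight q^(k+1) (sigma_inv x - sigma x) of the k+1-st term of the Hahn integral is minus
   the spacing sigma s - sigma_inv s at s = sigma^(k+1) x; this is why the integral telescopes. *)
Lemma hahn_quot_sigma_iter g k x : x <> omega0 q w ->
  (sigma_inv q w x - sigma q w x) * (q ^ S k * hahn_quot q w g (sigma_iter q w (S k) x))
  = g (sigma_iter q w k x) - g (sigma_iter q w (S (S k)) x).
Proof.
  intros Hx. set (s := sigma_iter q w (S k) x).
  assert (Es : s - omega0 q w = q ^ S k * (x - omega0 q w)) by apply sigma_iter_minus_omega0.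
  assert (Hs : sigma q w s - sigma_inv q w s = q ^ S k * (x - omega0 q w) * (q - / q)).
  { replace (sigma q w s - sigma_inv q w s)
      with ((sigma q w s - omega0 q w) - (sigma_inv q w s - omega0 q w)) by ring.
    rewrite sigma_minus_omega0, sigma_inv_minus_omega0, Es. field. lra. }
  assert (Hx' : sigma_inv q w x - sigma q w x = (x - omega0 q w) * (/ q - q)).
  { replace (sigma_inv q w x - sigma q w x)
      with ((sigma_inv q w x - omega0 q w) - (sigma q w x - omega0 q w)) by ring.
    rewrite sigma_minus_omega0, sigma_inv_minus_omega0. field. lra. }
  assert (Hqk : q ^ S k <> 0) by (apply pow_nonzero; lra).
  assert (Hqq : q * q - 1 <> 0) by nra.
  assert (Hsigma : sigma q w s = sigma_iter q w (S (S k)) x) by reflexivity.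
  assert (Hsigma_inv : sigma_inv q w s = sigma_iter q w k x) by apply sigma_inv_sigma.
  unfold hahn_quot. fold s. rewrite Hs, Hx', Hsigma, Hsigma_inv.
  field. repeat split; auto; lra.
Qed.

Section OnInterval.

Variable I : R -> Prop.
Hypothesis HI : is_interval I.
Hypothesis HI0 : I (omega0 q w).

Lemma sigma_iter_in_interval k x : I x -> I (sigma_iter q w k x).
Proof.
  intros Hx. pose proof (sigma_iter_minus_omega0 k x) as E.
  assert (0 < q ^ k) by (apply pow_lt; lra).
  assert (q ^ k <= 1) by (rewrite <- (pow1 k); apply pow_incr; lra).
  apply (is_interval_between I x (omega0 q w)); auto.
  destruct (Rle_dec x (omega0 q w)); [left | right]; split; nra.
Qed.

Lemma qw_set_in_interval a b t : I a -> I b -> qw_set q w a b t ->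
  I t /\ I (sigma q w t) /\ I (sigma_inv q w t).
Proof.
  intros Ha Hb Ht.
  assert (Hpoint : forall x, I x -> qw_point_set q w x t ->
            I t /\ I (sigma q w t) /\ I (sigma_inv q w t)).
  { intros x Hx [[n ->] | ->].
    - replace (2 * n + 1)%nat with (S (2 * n)) by lia.
      split; [|split]; try apply (sigma_iter_in_interval (S _)); auto.
      simpl sigma_iter. rewrite sigma_inv_sigma. now apply sigma_iter_in_interval.
    - now rewrite sigma_omega0, sigma_inv_omega0. }
  destruct Ht as [Ht|Ht]; [apply (Hpoint a) | apply (Hpoint b)]; auto.
Qed.

(* sigma_inv moves points away from omega0, so this needs I to extend beyond t on the side of t. *)
Lemma near_omega0_sigma_inv_in_interval :
  within I (locally (omega0 q w)) (fun t => I (sigma_inv q w t)).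
Proof.
  set (o := omega0 q w).
  assert (Hside : forall s : R, s = 1 \/ s = -1 -> exists del, 0 < del /\
            forall t, 0 < s * (t - o) < del -> I t -> I (sigma_inv q w t)).
  { intros s Hs.
    destruct (classic (exists p, I p /\ 0 < s * (p - o))) as [[p [Hp Hps]]|Hnone].
    - exists (q * (s * (p - o))). split; [nra|]. intros t Ht _.
      assert (Et : s * (sigma_inv q w t - o) = s * (t - o) / q).
      { unfold o. rewrite sigma_inv_minus_omega0. field. lra. }
      assert (0 < s * (t - o) / q < s * (p - o)).
      { split; [apply Rdiv_lt_0_compat; lra|].
        apply (Rmult_lt_reg_l q); [lra|].
        replace (q * (s * (t - o) / q)) with (s * (t - o)) by (field; lra). lra. }
      apply (is_interval_between I o p); auto.
      destruct Hs as [-> | ->]; [left | right]; lra.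
    - exists 1. split; [lra|]. intros t Ht HIt.
      exfalso. apply Hnone. exists t. split; auto; lra. }
  destruct (Hside 1 (or_introl eq_refl)) as [d1 [Hd1 Hright]].
  destruct (Hside (-1) (or_intror eq_refl)) as [d2 [Hd2 Hleft]].
  exists (mkposreal _ (Rmin_pos _ _ Hd1 Hd2)). intros t Ht HIt.
  change (Rabs (t - o) < Rmin d1 d2) in Ht.
  pose proof (Rmin_l d1 d2). pose proof (Rmin_r d1 d2).
  destruct (Rtotal_order t o) as [Hlt|[->|Hgt]].
  - apply Hleft; auto. rewrite Rabs_left in Ht by lra. lra.
  - unfold o. now rewrite sigma_inv_omega0.
  - apply Hright; auto. rewrite Rabs_right in Ht by lra. lra.
Qed.

Lemma hahn_D_ext f g t : (forall t, I t -> f t = g t) ->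
  I t -> I (sigma q w t) -> I (sigma_inv q w t) -> hahn_D q w I f t = hahn_D q w I g t.
Proof.
  intros E Ht H1 H2. unfold hahn_D. destruct (Req_EM_T t (omega0 q w)).
  - now apply derive_within_ext.
  - unfold hahn_quot. now rewrite (E _ H1), (E _ H2).
Qed.

Lemma Y1_ext a b f g : I a -> I b ->
  (forall t, I t -> f t = g t) -> Y1 q w I a b f -> Y1 q w I a b g.
Proof.
  intros Ha Hb E [[d Hd] [[M1 HM1] [[M2 HM2] [Hc1 Hc2]]]].
  split; [exists d; now apply (is_derive_within_ext I f)|].
  split; [|split; [|split]].
  - exists M1. intros t Ht. destruct (qw_set_in_interval a b t Ha Hb Ht) as [It _].
    rewrite <- (E t It). auto.
  - exists M2. intros t Ht. destruct (qw_set_in_interval a b t Ha Hb Ht) as [It [I1 I2]].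
    rewrite <- (hahn_D_ext f g t E It I1 I2). auto.
  - unfold cont_within in *. rewrite <- (E _ HI0).
    now apply (filterlim_within_ext I f).
  - unfold cont_within in *.
    rewrite <- (hahn_D_ext f g _ E HI0) by (now rewrite ?sigma_omega0, ?sigma_inv_omega0).
    apply (filterlim_ext_loc (hahn_D q w I f)); auto.
    apply (filter_imp (F := locally (omega0 q w)) (fun t => I t -> I (sigma_inv q w t)));
      [|exact near_omega0_sigma_inv_in_interval].
    intros t Hinv HIt. apply hahn_D_ext; auto.
    apply (sigma_iter_in_interval 1). exact HIt.
Qed.

Lemma is_lim_seq_sigma_iter F x (m : nat -> nat) : I x ->
  cont_within I F (omega0 q w) -> (forall n, (n <= m n)%nat) ->
  is_lim_seq (fun n => F (sigma_iter q w (m n) x)) (F (omega0 q w)).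
Proof.
  intros Hx HF Hm. apply is_lim_seq_spec. intros eps.
  destruct (proj1 (filterlim_locally (F := within I (locally (omega0 q w))) F _) HF eps)
    as [d Hd].
  assert (Hp : 0 < d / (Rabs (x - omega0 q w) + 1)).
  { apply Rdiv_lt_0_compat; [apply cond_pos|]. pose proof (Rabs_pos (x - omega0 q w)); lra. }
  destruct (pow_lt_1_zero q ltac:(rewrite Rabs_pos_eq; lra) _ Hp) as [N HN].
  exists N. intros n Hn.
  apply (Hd (sigma_iter q w (m n) x)); [|now apply sigma_iter_in_interval].
  change (Rabs (sigma_iter q w (m n) x - omega0 q w) < d).
  rewrite sigma_iter_minus_omega0, Rabs_mult.
  specialize (HN (m n) ltac:(specialize (Hm n); lia)).
  pose proof (Rabs_pos (x - omega0 q w)). pose proof (Rabs_pos (q ^ m n)).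
  apply (Rmult_lt_compat_r (Rabs (x - omega0 q w) + 1)) in HN; [|lra].
  unfold Rdiv in HN. rewrite Rmult_assoc, Rinv_l in HN by lra. nra.
Qed.

(* Near omega0 the values F(sigma^(2n+1) x) stay bounded, and the weights q^(2n+1) are geometric. *)
Lemma ex_series_hahn_int0 F x : I x -> cont_within I F (omega0 q w) ->
  ex_series (fun n => q ^ (2 * n + 1) * F (sigma_iter q w (2 * n + 1) x)).
Proof.
  intros Hx HF.
  pose proof (is_lim_seq_sigma_iter F x (fun n => (2 * n + 1)%nat) Hx HF
                ltac:(intros n; cbv beta; lia)) as Hlim.
  apply is_lim_seq_spec in Hlim.
  destruct (Hlim (mkposreal 1 Rlt_0_1)) as [N HN].
  change (pos (mkposreal 1 Rlt_0_1)) with 1 in HN.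
  apply (ex_series_incr_n _ N).
  set (M := Rabs (F (omega0 q w)) + 1).
  apply (ex_series_le (V := R_CompleteNormedModule) _
           (fun k => (q ^ (2 * N + 1) * M) * (q ^ 2) ^ k)).
  - intros k. change (norm ?z) with (Rabs z).
    rewrite <- pow_mult.
    replace (2 * (N + k) + 1)%nat with ((2 * N + 1) + 2 * k)%nat by lia.
    rewrite pow_add.
    assert (0 < q ^ (2 * N + 1)) by (apply pow_lt; lra).
    assert (0 < q ^ (2 * k)) by (apply pow_lt; lra).
    rewrite Rabs_mult, Rabs_pos_eq by (apply Rmult_le_pos; lra).
    specialize (HN (N + k)%nat (Nat.le_add_r N k)).
    replace (2 * N + 1 + 2 * k)%nat with (2 * (N + k) + 1)%nat by lia.
    pose proof (Rabs_triang_inv (F (sigma_iter q w (2 * (N + k) + 1) x)) (F (omega0 q w))).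
    replace (q ^ (2 * N + 1) * M * q ^ (2 * k)) with (q ^ (2 * N + 1) * q ^ (2 * k) * M) by ring.
    apply Rmult_le_compat_l; [nra | unfold M; lra].
  - apply (ex_series_scal (V := R_NormedModule) (q ^ (2 * N + 1) * M)).
    eexists. apply is_series_geom. rewrite Rabs_pos_eq; nra.
Qed.

Lemma hahn_int0_minus F1 F2 x : I x ->
  cont_within I F1 (omega0 q w) -> cont_within I F2 (omega0 q w) ->
  hahn_int0 q w (fun t => F1 t - F2 t) x = hahn_int0 q w F1 x - hahn_int0 q w F2 x.
Proof.
  intros Hx H1 H2. unfold hahn_int0. rewrite <- Rmult_minus_distr_l, <- Series_minus.
  - f_equal. apply Series_ext. intros n. ring.
  - now apply ex_series_hahn_int0.
  - now apply ex_series_hahn_int0.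
Qed.

Lemma hahn_int0_antiderivative g F x : I x -> cont_within I g (omega0 q w) ->
  (forall n, hahn_D_is q w I g (sigma_iter q w (2 * n + 1) x)
               (F (sigma_iter q w (2 * n + 1) x))) ->
  hahn_int0 q w F x = g x - g (omega0 q w).
Proof.
  intros Hx Hg HgF. unfold hahn_int0.
  destruct (Req_dec x (omega0 q w)) as [->|Hne].
  { rewrite sigma_omega0, sigma_inv_omega0. ring. }
  rewrite <- Series_scal_l.
  rewrite (Series_ext _ (fun n => g (sigma_iter q w (2 * n) x)
                                  - g (sigma_iter q w (2 * S n) x))).
  - apply is_series_unique.
    exact (is_series_telescope _ _
             (is_lim_seq_sigma_iter g x (fun n => (2 * n)%nat) Hx Hg ltac:(intros n; cbv beta; lia))).
  - intros n. replace (2 * n + 1)%nat with (S (2 * n)) by lia.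
    replace (2 * S n)%nat with (S (S (2 * n))) by lia.
    destruct (HgF n) as [Hquot _].
    replace (2 * n + 1)%nat with (S (2 * n)) in Hquot by lia.
    rewrite <- (Hquot (sigma_iter_neq_omega0 _ _ Hne)).
    exact (hahn_quot_sigma_iter g (2 * n) x Hne).
Qed.

Lemma hahn_int_antiderivative g F a b : I a -> I b ->
  (forall t, qw_set q w a b t -> hahn_D_is q w I g t (F t)) ->
  hahn_int q w F a b = g b - g a.
Proof.
  intros Ha Hb HgF.
  assert (Hg : cont_within I g (omega0 q w)).
  { apply (is_derive_within_cont I g _ (F (omega0 q w))).
    apply (HgF (omega0 q w)); [left; now right | reflexivity]. }
  unfold hahn_int.
  rewrite (hahn_int0_antiderivative g F b), (hahn_int0_antiderivative g F a); auto; [ring | |];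
    intros n; apply HgF; [left | right]; left; now exists n.
Qed.

Lemma functional_sub_antiderivative L Lbar y yb g a b : I a -> I b ->
  cont_within I (lag_comp q w I L y) (omega0 q w) ->
  cont_within I (lag_comp q w I Lbar yb) (omega0 q w) ->
  (forall t, qw_set q w a b t ->
     hahn_D_is q w I g t (lag_comp q w I L y t - lag_comp q w I Lbar yb t)) ->
  functional q w I L a b y - functional q w I Lbar a b yb = g b - g a.
Proof.
  intros Ha Hb HL HLbar Hg. unfold functional, hahn_int.
  rewrite <- (hahn_int_antiderivative g _ a b Ha Hb Hg). unfold hahn_int.
  rewrite !hahn_int0_minus; auto. ring.
Qed.

End OnInterval.

End HahnOperators.

Theorem lemma3p13
  (q w : R) (I : R -> Prop) (a b alpha beta : R)
  (L Lbar : R -> R -> R -> R) (z zbar : R -> R -> R) (G : R -> R -> R)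
  (Hq : 0 < q < 1) (Hw : 0 <= w)
  (HI : is_interval I) (HI0 : I (omega0 q w)) (Ha : I a) (Hb : I b) (Hab : a < b)
  (HL : lagrangian_hyp q w I a b L
          (fun y => Y1 q w I a b y /\ y a = alpha /\ y b = beta))
  (HLbar : lagrangian_hyp q w I a b Lbar
          (fun yb => Y1 q w I a b yb /\ yb a = zbar a alpha /\ yb b = zbar b beta))
  (Hinv : forall t, qw_set q w a b t ->
          forall u, zbar t (z t u) = u /\ z t (zbar t u) = u)
  (Hcorr_to : forall yb, (Y1 q w I a b yb /\ yb a = zbar a alpha /\ yb b = zbar b beta) ->
          exists y, (Y1 q w I a b y /\ y a = alpha /\ y b = beta) /\
                    forall t, I t -> y t = z t (yb t))
  (Hcorr_from : forall y, (Y1 q w I a b y /\ y a = alpha /\ y b = beta) ->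
          exists yb, (Y1 q w I a b yb /\ yb a = zbar a alpha /\ yb b = zbar b beta) /\
                     forall t, I t -> y t = z t (yb t))
  (Hcorr_inj : forall y yb1 yb2,
          (Y1 q w I a b yb1 /\ yb1 a = zbar a alpha /\ yb1 b = zbar b beta) ->
          (Y1 q w I a b yb2 /\ yb2 a = zbar a alpha /\ yb2 b = zbar b beta) ->
          (forall t, I t -> y t = z t (yb1 t)) ->
          (forall t, I t -> y t = z t (yb2 t)) ->
          forall t, I t -> yb1 t = yb2 t)
  (HG : forall y yb,
          (Y1 q w I a b y /\ y a = alpha /\ y b = beta) ->
          (Y1 q w I a b yb /\ yb a = zbar a alpha /\ yb b = zbar b beta) ->
          (forall t, I t -> y t = z t (yb t)) ->
          forall t, qw_set q w a b t ->
            hahn_D_is q w I (fun tau => G tau (yb tau)) t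
              (lag_comp q w I L y t - lag_comp q w I Lbar yb t)) :
  forall ybs : R -> R,
    (Y1 q w I a b ybs /\ ybs a = zbar a alpha /\ ybs b = zbar b beta) ->
    let ys := fun t => z t (ybs t) in
    ((forall yb, (Y1 q w I a b yb /\ yb a = zbar a alpha /\ yb b = zbar b beta) ->
        functional q w I Lbar a b yb <= functional q w I Lbar a b ybs) ->
     (Y1 q w I a b ys /\ ys a = alpha /\ ys b = beta) /\
     forall y, (Y1 q w I a b y /\ y a = alpha /\ y b = beta) ->
        functional q w I L a b y <= functional q w I L a b ys)
    /\
    ((forall yb, (Y1 q w I a b yb /\ yb a = zbar a alpha /\ yb b = zbar b beta) ->
        functional q w I Lbar a b ybs <= functional q w I Lbar a b yb) ->
     (Y1 q w I a b ys /\ ys a = alpha /\ ys b = beta) /\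
     forall y, (Y1 q w I a b y /\ y a = alpha /\ y b = beta) ->
        functional q w I L a b ys <= functional q w I L a b y).
Proof.
  intros ybs Hybs ys.
  set (C := G b (zbar b beta) - G a (zbar a alpha)).
  assert (Hshift : forall y yb,
    (Y1 q w I a b y /\ y a = alpha /\ y b = beta) ->
    (Y1 q w I a b yb /\ yb a = zbar a alpha /\ yb b = zbar b beta) ->
    (forall t, I t -> y t = z t (yb t)) ->
    functional q w I L a b y = functional q w I Lbar a b yb + C).
  { intros y yb Hy Hyb Hcorr.
    pose proof (functional_sub_antiderivative q w Hq I HI HI0 L Lbar y yb
                  (fun tau => G tau (yb tau)) a b Ha Hb
                  (proj1 (proj2 HL y Hy)) (proj1 (proj2 HLbar yb Hyb))
                  (HG y yb Hy Hyb Hcorr)) as Hdiff.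
    destruct Hyb as [_ [Hya Hyb]]. simpl in Hdiff. unfold C. rewrite <- Hya, <- Hyb. lra. }
  destruct (Hcorr_to ybs Hybs) as [y0 [[Hy0 [Hy0a Hy0b]] Hcorr0]].
  assert (Hys : Y1 q w I a b ys /\ ys a = alpha /\ ys b = beta).
  { split; [|split]; unfold ys.
    - exact (Y1_ext q w Hq I HI HI0 a b y0 ys Ha Hb Hcorr0 Hy0).
    - now rewrite <- (Hcorr0 a Ha).
    - now rewrite <- (Hcorr0 b Hb). }
  pose proof (Hshift ys ybs Hys Hybs (fun t _ => eq_refl)) as Hs.
  split; intros Hopt; split; auto; intros y Hy;
    destruct (Hcorr_from y Hy) as [yb [Hyb Hcorr]];
    pose proof (Hshift y yb Hy Hyb Hcorr); specialize (Hopt yb Hyb); lra.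
Qed.
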